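(* Let $\varphi$ be an $\mathrm{FO}(A)$-sentence and $B\subseteq A$. (1) $\varphi$ is continuous in $B$ iff it is equivalent to a disjunction of sentences $\nabla^B_{\mathrm{FO}}(\Sigma,\Sigma^-_B)$ for sets of types $\Sigma\subseteq\wp(A)$, where $\Sigma^-_B:=\{S\in\Sigma: S\cap B=\varnothing\}$. (2) If $\varphi$ is monotone in $A$, then $\varphi$ is continuous in $B$ iff it is equivalent to a disjunction of sentences $\nabla^+_{\mathrm{FO}}(\Sigma,\Sigma^-_B)$ for $\Sigma\subseteq\wp(A)$.
   Context: Fix a finite set $A$ of unary predicate symbols. A monadic model is a pair $(D,V)$ with $D$ a set (possibly empty) and $V:A\to\wp(D)$. $\mathrm{FO}(A)$ is monadic first-order logic without equality over $A$ (negation normal form). On the empty model $\exists x.\varphi$ is false and $\forall x.\varphi$ true. $V\le_BV'$ means $V(b)\subseteq V'(b)$ for $b\in B$ and $V(a)=V'(a)$ for $a\notin B$; $\varphi$ is monotone in $B$ if truth is preserved along $\le_B$. $U\le^\omega_BV$ means $U\le_BV$ and each $U(b)$, $b\in B$, is finite; $\varphi$ is continuous in $B$ if it is monotone in $B$ and whenever $(D,V)\models\varphi$ there is $U\le^\omega_BV$ with $(D,U)\models\varphi$. $\tau^B_S(x):=\bigwedge_{a\in S}a(x)\wedge\bigwedge_{a\in A\setminus(S\cup B)}\neg a(x)$; empty conjunction $\top$, empty disjunction $\bot$. $\nabla^B_{\mathrm{FO}}(\Sigma,\Pi):=\bigwedge_{S\in\Sigma}\exists x.\tau^B_S(x)\wedge\forall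 x.\bigvee_{S\in\Pi}\tau^B_S(x)$ and $\nabla^+_{\mathrm{FO}}(\Sigma,\Pi):=\nabla^A_{\mathrm{FO}}(\Sigma,\Pi)$. *)

From Stdlib Require List.
From mathcomp Require Import all_boot.
Set Implicit Arguments. Unset Strict Implicit. Unset Printing Implicit Defensive.

Section Monadic.
Variable A : finType.

(* FO(A): monadic first-order logic without equality, negation normal form.
   Variables are de Bruijn indices. *)
Inductive form : Type :=
| FAtom : A -> nat -> form
| FNAtom : A -> nat -> form
| FTop : form
| FBot : form
| FAnd : form -> form -> form
| FOr : form -> form -> form
| FEx : form -> form
| FAll : form -> form.

Fixpoint bound_by (n : nat) (f : form) : Prop :=
  match f with
  | FAtom _ i | FNAtom _ i => (i < n)%N
  | FTop | FBot => True
  | FAnd g h | FOr g h => bound_by n g /\ bound_by n h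
  | FEx g | FAll g => bound_by n.+1 g
  end.

Definition sentence (f : form) : Prop := bound_by 0 f.

(* A monadic model (D, V): D any type (possibly empty), V : A -> subsets of D. *)
Fixpoint sat (D : Type) (V : A -> D -> Prop) (env : list D) (f : form) : Prop :=
  match f with
  | FAtom a i => match List.nth_error env i with Some d => V a d | None => False end
  | FNAtom a i => match List.nth_error env i with Some d => ~ V a d | None => False end
  | FTop => True
  | FBot => False
  | FAnd g h => sat V env g /\ sat V env h
  | FOr g h => sat V env g \/ sat V env h
  | FEx g => exists d : D, sat V (d :: env) g
  | FAll g => forall d : D, sat V (d :: env) g
  end.

Definition models (D : Type) (V : A -> D -> Prop) (f : form) : Prop := sat V nil f.

Definition leB (B : {set A}) (D : Type) (V V' : A -> D -> Prop) : Prop :=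
  (forall b, b \in B -> forall d, V b d -> V' b d) /\
  (forall a, a \notin B -> forall d, V a d <-> V' a d).

Definition finite_subset (D : Type) (X : D -> Prop) : Prop :=
  exists l : list D, forall d, X d -> List.In d l.

Definition leB_fin (B : {set A}) (D : Type) (U V : A -> D -> Prop) : Prop :=
  leB B U V /\ forall b, b \in B -> finite_subset (U b).

Definition monotone_in (B : {set A}) (f : form) : Prop :=
  forall (D : Type) (V V' : A -> D -> Prop), leB B V V' -> models V f -> models V' f.

Definition continuous_in (B : {set A}) (f : form) : Prop :=
  monotone_in B f /\
  forall (D : Type) (V : A -> D -> Prop), models V f ->
    exists U : A -> D -> Prop, leB_fin B U V /\ models U f.

Definition equivalent (f g : form) : Prop :=
  forall (D : Type) (V : A -> D -> Prop), models V f <-> models V g.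

Definition bigAnd (l : seq form) : form := foldr FAnd FTop l.
Definition bigOr (l : seq form) : form := foldr FOr FBot l.

Definition tau (B T : {set A}) : form :=
  FAnd (bigAnd [seq FAtom a 0 | a <- enum T])
       (bigAnd [seq FNAtom a 0 | a <- enum (~: (T :|: B))]).

Definition nablaFO (B : {set A}) (Sigma Pi : {set {set A}}) : form :=
  FAnd (bigAnd [seq FEx (tau B T) | T <- enum Sigma])
       (FAll (bigOr [seq tau B T | T <- enum Pi])).

Definition nablaPlusFO (Sigma Pi : {set {set A}}) : form := nablaFO setT Sigma Pi.

Definition SigmaMinus (B : {set A}) (Sigma : {set {set A}}) : {set {set A}} :=
  [set T in Sigma | T :&: B == set0].

End Monadic.

From Stdlib Require List.
From mathcomp Require Import all_boot boolp.
Set Implicit Arguments. Unset Strict Implicit. Unset Printing Implicit Defensive.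

(** Truth of a sentence is invariant under colour-preserving relations that are
    total and surjective, so a model matters only through the set of types it
    realizes.  A normal form [nabla^B'(Sigma, Sigma^-_B)] with [B <= B'] has no
    negative [B]-literals, hence is monotone in [B]; it is continuous because
    the types required at every point avoid [B], so the [B]-colours can be cut
    down to finitely many witnesses of the existential part.
    Conversely, let [V] satisfy [phi], continuous in [B].  Replace each point of
    [V] by countably many copies and take a [B]-finite [U <= V] satisfying
    [phi]: some copy of every point then carries no [B]-colour, so [U] satisfies
    the normal form built from the set [Sigma] of types it realizes, and by
    monotonicity so does [V].  That normal form entails [phi] whenever [phi] is
    monotone in [B']: given a model [W] of it, the pairs (w, S) with [w] of a
    type [S] in [Sigma] form a model equivalent to [U], lying [B']-below a model
    equivalent to [W]. *)

Lemma InP (T : eqType) (x : T) (s : seq T) : List.In x s <-> x \in s.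
Proof.
elim: s => [|y s IH] //=; rewrite in_cons; split.
- by case=> [->|/IH ->]; rewrite ?eqxx ?orbT.
- by case/orP=> [/eqP ->|/IH]; [left|right].
Qed.

Lemma finite_subset_bound (T : Type) (f : T -> nat) (X : T -> Prop) :
  finite_subset X -> exists N, forall x, X x -> f x < N.
Proof.
case=> l Xl; suff [N HN] : exists N, forall x, List.In x l -> f x < N.
  by exists N => x /Xl /HN.
elim: l {Xl} => [|y l [N HN]]; first by exists 0.
exists (maxn (f y).+1 N) => x [<-|/HN lt_xN]; rewrite leq_max ?ltnSn //.
by rewrite lt_xN orbT.
Qed.

Lemma finite_family_bound (I T : Type) (f : T -> nat) (X : I -> T -> Prop) (s : list I) :
  (forall i, List.In i s -> finite_subset (X i)) ->
  exists N, forall i, List.In i s -> forall x, X i x -> f x < N.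
Proof.
elim: s => [|i s IH] fin_X; first by exists 0.
have [N1 HN1] := finite_subset_bound f (fin_X i (or_introl erefl)).
have [N2 HN2] := IH (fun j sj => fin_X j (or_intror sj)).
exists (maxn N1 N2) => j [<-|sj] x Xx; rewrite leq_max.
- by rewrite (HN1 x Xx).
- by rewrite (HN2 j sj x Xx) orbT.
Qed.

Lemma list_witness (T D : Type) (P : T -> D -> Prop) (s : seq T) :
  (forall x, List.In x s -> exists d, P x d) ->
  exists l : list D, forall x, List.In x s -> exists2 d, List.In d l & P x d.
Proof.
elim: s => [|x s IH] exP; first by exists nil.
have [d Pxd] := exP x (or_introl erefl).
have [l wit_l] := IH (fun y sy => exP y (or_intror sy)).
exists (d :: l) => y [<-|/wit_l [e le Pye]]; first by exists d; first left.
by exists e; first right.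
Qed.

Lemma nth_error_Forall2 (D D' : Type) (R : D -> D' -> Prop) env env' i :
  List.Forall2 R env env' ->
  (List.nth_error env i = None /\ List.nth_error env' i = None) \/
  exists d d', [/\ List.nth_error env i = Some d, List.nth_error env' i = Some d' & R d d'].
Proof.
move=> R_env; elim: R_env i => [|x y l l' Rxy _ IH] [|i] /=; try by left.
- by right; exists x, y.
- exact: IH.
Qed.

Section Monadic.
Variable A : finType.
Implicit Types (B : {set A}) (S : {set A}) (f phi : form A) (Sig Pi : {set {set A}}).

Lemma sat_bigAnd D (V : A -> D -> Prop) env (T : Type) (g : T -> form A) s :
  sat V env (bigAnd [seq g x | x <- s]) <-> forall x, List.In x s -> sat V env (g x).
Proof.
elim: s => [|y s IH] /=; first by split.
rewrite IH; split=> [[gy gs] x [<-|/gs] //|gs].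
by split=> [|x sx]; apply: gs; [left|right].
Qed.

Lemma sat_bigOr D (V : A -> D -> Prop) env (T : Type) (g : T -> form A) s :
  sat V env (bigOr [seq g x | x <- s]) <-> exists2 x, List.In x s & sat V env (g x).
Proof.
elim: s => [|y s IH] /=; first by split=> // -[].
rewrite IH; split=> [[gy|[x sx gx]]|[x [<-|sx] gx]].
- by exists y; first left.
- by exists x; first right.
- by left.
- by right; exists x.
Qed.

Definition fits B D (V : A -> D -> Prop) (d : D) (S : {set A}) : Prop :=
  (forall a, a \in S -> V a d) /\ (forall a, a \notin S -> a \notin B -> ~ V a d).

Lemma sat_tau B S D (V : A -> D -> Prop) d env :
  sat V (d :: env) (tau B S) <-> fits B V d S.
Proof.
rewrite /tau /= (sat_bigAnd V _ (fun a => FAtom a 0)).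
rewrite (sat_bigAnd V _ (fun a => FNAtom a 0)) /=.
split=> [[inS outS]|[inS outS]]; split=> a.
- by move=> Sa; apply: inS; rewrite InP mem_enum.
- by move=> Sa Ba; apply: outS; rewrite InP mem_enum !inE negb_or Sa.
- by rewrite InP mem_enum; apply: inS.
- by rewrite InP mem_enum !inE negb_or => /andP[]; apply: outS.
Qed.

Lemma models_nablaFO B Sig Pi D (V : A -> D -> Prop) :
  models V (nablaFO B Sig Pi) <->
  (forall S, S \in Sig -> exists d, fits B V d S) /\
  (forall d, exists2 S, S \in Pi & fits B V d S).
Proof.
rewrite /models /nablaFO /= (sat_bigAnd V _ (fun S => FEx (tau B S))) /=.
split=> [[exS allPi]|[exS allPi]]; split.
- move=> S Sig_S; have [|d] := exS S; first by rewrite InP mem_enum.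
  by move/sat_tau; exists d.
- move=> d; have /(sat_bigOr V _ (tau B)) [S] := allPi d.
  by rewrite InP mem_enum => Pi_S /sat_tau; exists S.
- move=> S; rewrite InP mem_enum => /exS [d fit_d].
  by exists d; apply/sat_tau.
- move=> d; apply/(sat_bigOr V _ (tau B)); have [S Pi_S fit_d] := allPi d.
  by exists S; [rewrite InP mem_enum | apply/sat_tau].
Qed.

Section Bisimulation.
Variables (D D' : Type) (V : A -> D -> Prop) (V' : A -> D' -> Prop) (R : D -> D' -> Prop).
Hypotheses (R_colours : forall d d', R d d' -> forall a, V a d <-> V' a d')
           (R_total : forall d, exists d', R d d')
           (R_surj : forall d', exists d, R d d').

Lemma sat_bisim f env env' :
  List.Forall2 R env env' -> sat V env f <-> sat V' env' f.
Proof.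
elim: f env env' => [a i|a i| | |g IHg h IHh|g IHg h IHh|g IHg|g IHg] env env' R_env /=.
- by case: (nth_error_Forall2 i R_env) => [[-> ->]|[d [d' [-> -> /R_colours]]]].
- by case: (nth_error_Forall2 i R_env) => [[-> ->]|[d [d' [-> -> /R_colours ->]]]].
- by [].
- by [].
- by rewrite (IHg _ _ R_env) (IHh _ _ R_env).
- by rewrite (IHg _ _ R_env) (IHh _ _ R_env).
- split=> [[d]|[d']].
  + by have [d' Rdd'] := R_total d; exists d'; apply/(IHg (d :: env)) => //; constructor.
  + by have [d Rdd'] := R_surj d'; exists d; apply/(IHg _ (d' :: env')) => //; constructor.
- split=> gall.
  + move=> d'; have [d Rdd'] := R_surj d'.
    by apply/(IHg (d :: env)); [constructor | exact: gall].
  + move=> d; have [d' Rdd'] := R_total d.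
    by apply/(IHg _ (d' :: env')); [constructor | exact: gall].
Qed.

Lemma models_bisim f : models V f <-> models V' f.
Proof. exact: sat_bisim. Qed.

End Bisimulation.

Lemma models_comp D D' (V : A -> D -> Prop) (g : D' -> D) f :
  (forall d, exists d', g d' = d) -> models (fun a d' => V a (g d')) f <-> models V f.
Proof.
move=> g_surj; apply: (models_bisim (R := fun d' d => g d' = d)) => //.
- by move=> d' d <-.
- by move=> d'; exists (g d').
Qed.

Lemma fits_leB B B' D (V V' : A -> D -> Prop) d S :
  B \subset B' -> leB B V V' -> fits B' V d S -> fits B' V' d S.
Proof.
move=> sBB' [VB Vout] [inS outS]; split=> a.
- move=> Sa; have [Ba|Ba] := boolP (a \in B); first exact: VB _ Ba _ (inS a Sa).
  exact/Vout/inS.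
- move=> Sa B'a; have Ba : a \notin B by apply: contra B'a; apply: (subsetP sBB').
  by rewrite -Vout //; apply: outS.
Qed.

Lemma nablaFO_monotone B B' Sig Pi : B \subset B' -> monotone_in B (nablaFO B' Sig Pi).
Proof.
move=> sBB' D V V' leV /models_nablaFO [exSig allPi]; apply/models_nablaFO; split.
- by move=> S /exSig [d /(fits_leB sBB' leV)]; exists d.
- by move=> d; have [S Pi_S /(fits_leB sBB' leV)] := allPi d; exists S.
Qed.

Definition restrict B D (V : A -> D -> Prop) (l : list D) : A -> D -> Prop :=
  fun a d => V a d /\ (a \in B -> List.In d l).

Lemma restrict_leB_fin B D (V : A -> D -> Prop) l : leB_fin B (restrict B V l) V.
Proof.
split; first split.
- by move=> b _ d [].
- by move=> a Ba d; split=> [[]|Vad] //; split=> // /(negP Ba).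
- by move=> b Bb; exists l => d [_ /(_ Bb)].
Qed.

Lemma fits_restrict B B' D (V : A -> D -> Prop) l d S :
  (forall a, a \in S -> a \in B -> List.In d l) ->
  fits B' V d S -> fits B' (restrict B V l) d S.
Proof.
move=> S_l [inS outS]; split=> [a Sa|a Sa B'a [Vad _]]; last exact: outS Vad.
by split; [apply: inS | apply: S_l].
Qed.

Lemma nablaFO_continuous B B' Sig Pi :
  B \subset B' -> (forall S, S \in Pi -> S :&: B = set0) ->
  continuous_in B (nablaFO B' Sig Pi).
Proof.
move=> sBB' Pi_B; split; first exact: nablaFO_monotone.
move=> D V /models_nablaFO [exSig allPi].
have [l wit_l] : exists l, forall S, List.In S (enum Sig) ->
    exists2 d, List.In d l & fits B' V d S.
  by apply: list_witness => S; rewrite InP mem_enum; apply: exSig.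
exists (restrict B V l); split; first exact: restrict_leB_fin.
apply/models_nablaFO; split.
- move=> S; rewrite -mem_enum -InP => /wit_l [d l_d fit_d].
  by exists d; apply: fits_restrict fit_d.
- move=> d; have [S Pi_S fit_d] := allPi d; exists S => //.
  apply: fits_restrict fit_d => a Sa Ba.
  by have /setP/(_ a) := Pi_B S Pi_S; rewrite !inE Sa Ba.
Qed.

Lemma SigmaMinus_sub B Sig : SigmaMinus B Sig \subset Sig.
Proof. by apply/subsetP => S; rewrite inE => /andP[]. Qed.

Lemma SigmaMinus_disjoint B Sig S : S \in SigmaMinus B Sig -> S :&: B = set0.
Proof. by rewrite inE => /andP[_ /eqP]. Qed.

Lemma continuous_bigOr B (T : Type) (g : T -> form A) s :
  (forall x, continuous_in B (g x)) -> continuous_in B (bigOr [seq g x | x <- s]).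
Proof.
move=> cont_g; split.
- move=> D V V' leV /(sat_bigOr V nil g) [x sx gx]; apply/(sat_bigOr V' nil g).
  by exists x => //; apply: (proj1 (cont_g x)) leV gx.
- move=> D V /(sat_bigOr V nil g) [x sx /(proj2 (cont_g x)) [U [leU gx]]].
  by exists U; split=> //; apply/(sat_bigOr U nil g); exists x.
Qed.

Lemma continuous_equivalent B f g :
  equivalent f g -> continuous_in B g -> continuous_in B f.
Proof.
move=> fg [mon_g fin_g]; split.
- by move=> D V V' leV /fg gV; apply/fg; apply: mon_g leV gV.
- by move=> D V /fg /fin_g [U [leU gU]]; exists U; split=> //; apply/fg.
Qed.

Lemma nabla_normal_form_continuous B B' (F : {set {set {set A}}}) :
  B \subset B' ->
  continuous_in B (bigOr [seq nablaFO B' Sig (SigmaMinus B Sig) | Sig <- enum F]).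
Proof.
move=> sBB'; apply: continuous_bigOr => Sig.
exact: nablaFO_continuous sBB' (@SigmaMinus_disjoint B Sig).
Qed.

Definition type_of D (V : A -> D -> Prop) (d : D) : {set A} := [set a | `[< V a d >]].

Definition types_of D (V : A -> D -> Prop) : {set {set A}} :=
  [set S | `[< exists d, type_of V d = S >]].

Lemma mem_type_of D (V : A -> D -> Prop) d a : a \in type_of V d <-> V a d.
Proof. by rewrite inE; split=> /asboolP. Qed.

Lemma types_ofP D (V : A -> D -> Prop) S : S \in types_of V <-> exists d, type_of V d = S.
Proof. by rewrite inE; split=> /asboolP. Qed.

Lemma type_of_in_types D (V : A -> D -> Prop) d : type_of V d \in types_of V.
Proof. by apply/types_ofP; exists d. Qed.

Lemma fits_type_of B D (V : A -> D -> Prop) d : fits B V d (type_of V d).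
Proof. by split=> [a /mem_type_of|a /negP nTa _ /mem_type_of]. Qed.

Lemma nablaFO_types_entails B' phi D (U : A -> D -> Prop) Pi DW (W : A -> DW -> Prop) :
  monotone_in B' phi -> models U phi -> Pi \subset types_of U ->
  models W (nablaFO B' (types_of U) Pi) -> models W phi.
Proof.
move=> mon_phi U_phi sPiU /models_nablaFO [exSig allPi].
pose X := {p : DW * {set A} | p.2 \in types_of U /\ fits B' W p.1 p.2}.
pose N a (p : X) := a \in (sval p).2.
have N_phi : models N phi.
  apply: (iffLR (models_bisim (V := U) (V' := N)
                  (R := fun e p => type_of U e = (sval p).2) _ _ _ phi)) U_phi.
  - by move=> e p Ue_p a; rewrite /N -Ue_p mem_type_of.
  - move=> e; have [w fit_w] := exSig _ (type_of_in_types U e).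
    by exists (exist _ (w, type_of U e) (conj (type_of_in_types U e) fit_w)).
  - by case=> -[w S] [/types_ofP [e <-] _]; exists e.
have W_phi : models (fun a (p : X) => W a (sval p).1) phi.
  apply: mon_phi N_phi; rewrite /N; split=> [b _|a B'a] -[[w S] [_ [inS outS]]] /=.
  - exact: inS.
  - split=> [|Wa]; first exact: inS.
    by have [//|Sa] := boolP (a \in S); case: (outS a Sa B'a Wa).
apply: (iffLR (models_comp W (g := fun p : X => (sval p).1) phi _)) W_phi => w.
have [S Pi_S fit_w] := allPi w.
by exists (exist _ (w, S) (conj (subsetP sPiU S Pi_S) fit_w)).
Qed.

Lemma models_nablaFO_types B B' D (U : A -> D * nat -> Prop) :
  B \subset B' ->
  (forall b, b \in B -> finite_subset (U b)) ->
  (forall a, a \notin B -> forall d n m, U a (d, n) <-> U a (d, m)) ->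
  models U (nablaFO B' (types_of U) (SigmaMinus B (types_of U))).
Proof.
move=> sBB' fin_U U_copies.
have [N bound_N] : exists N, forall b, List.In b (enum B) -> forall p, U b p -> p.2 < N.
  by apply: finite_family_bound => b; rewrite InP mem_enum; apply: fin_U.
have fresh b d : b \in B -> ~ U b (d, N).
  by move=> Bb /(bound_N b); rewrite InP mem_enum ltnn => /(_ Bb).
apply/models_nablaFO; split.
- by move=> S /types_ofP [e <-]; exists e; apply: fits_type_of.
- case=> d n; exists (type_of U (d, N)).
  + rewrite inE type_of_in_types /=; apply/eqP/setP => a; rewrite !inE.
    have [Ba|Ba] := boolP (a \in B); rewrite ?andbT ?andbF //.
    by apply/negbTE/asboolPn/fresh.
  + split=> a.
    * move/mem_type_of; have [Ba|Ba] := boolP (a \in B); first by move/(fresh a d Ba).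
      by move/(U_copies a Ba d N n).
    * move=> /negP nTa B'a; have Ba : a \notin B by apply: contra B'a; apply: subsetP.
      by move/(U_copies a Ba d n N)/mem_type_of.
Qed.

Lemma continuous_has_nabla_normal_form B B' phi :
  B \subset B' -> monotone_in B' phi -> continuous_in B phi ->
  exists F : {set {set {set A}}},
    equivalent phi (bigOr [seq nablaFO B' Sig (SigmaMinus B Sig) | Sig <- enum F]).
Proof.
move=> sBB' mon_phi [_ fin_phi].
pose nabla Sig := nablaFO B' Sig (SigmaMinus B Sig).
exists [set Sig | `[< forall D (W : A -> D -> Prop), models W (nabla Sig) -> models W phi >]].
move=> D V; split=> [V_phi|/(sat_bigOr V nil nabla) [Sig]]; last first.
  by rewrite InP mem_enum inE => /asboolP; apply.
have fst_surj d : exists p : D * nat, p.1 = d by exists (d, 0).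
have [U [[leU fin_U] U_phi]] := fin_phi _ _ (iffRL (models_comp V phi fst_surj) V_phi).
have U_copies a (Ba : a \notin B) d n m : U a (d, n) <-> U a (d, m).
  by split=> /(proj2 leU a Ba _) V'a; apply/(proj2 leU a Ba _).
have U_nabla := models_nablaFO_types sBB' fin_U U_copies.
apply/(sat_bigOr V nil nabla); exists (types_of U).
- rewrite InP mem_enum inE; apply/asboolP => DW W.
  exact: nablaFO_types_entails mon_phi U_phi (SigmaMinus_sub _ _).
- apply: (iffLR (models_comp V (nabla (types_of U)) fst_surj)).
  exact: nablaFO_monotone sBB' _ _ _ leU U_nabla.
Qed.

End Monadic.

Theorem corollary5p7 (A : finType) (phi : form A) (B : {set A}) :
  sentence phi ->
  (continuous_in B phi <->
     exists F : {set {set {set A}}},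
       equivalent phi (bigOr [seq nablaFO B Sigma (SigmaMinus B Sigma) | Sigma <- enum F]))
  /\
  (monotone_in setT phi ->
     (continuous_in B phi <->
        exists F : {set {set {set A}}},
          equivalent phi (bigOr [seq nablaPlusFO Sigma (SigmaMinus B Sigma) | Sigma <- enum F]))).
Proof.
(* Neither direction needs [phi] to be closed: [models] evaluates in the empty
   environment, where literals in free variables are false. *)
move=> _; split; [split|move=> mon_phi; split].
- by move=> cont_phi; apply: continuous_has_nabla_normal_form (subxx B) cont_phi.1 cont_phi.
- case=> F /continuous_equivalent; apply; exact: nabla_normal_form_continuous (subxx B).
- exact: continuous_has_nabla_normal_form (subsetT B) mon_phi.
- case=> F /continuous_equivalent; apply; exact: nabla_normal_form_continuous (subsetT B).
Qed.
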